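(* Let $A$ be a primitive axial algebra of Jordan type $\tfrac12$ and let $a,b$ be distinct $\tfrac12$-axes such that $N=N_{a,b}$ has an identity element $\mathbf 1$ and $ab=-\tfrac14\mathbf 1+\tfrac12a+\tfrac12b$. Then, for $\{x,y\}=\{a,b\}$: (1) $\dim N=3$ and $x^{\tau(y)}=\mathbf 1-x$; (2) $N_{1/2}(x)=\mathbb F(\mathbf 1-2y)$; (3) $|\tau(a)\tau(b)|\in\{2,4\}$; (4) $|\tau(a)\tau(b)|=2$ if and only if $\tau(z)=\tau(\mathbf 1-z)$ for $z\in\{a,b\}$; (5) if $|\tau(a)\tau(b)|=4$ then $\tau(a)\tau(\mathbf 1-a)=\tau(b)\tau(\mathbf 1-b)=:t$ and the center of $\langle\tau(a),\tau(b)\rangle$ is $\langle t\rangle$; (6) $\mathbf 1-a$ and $\mathbf 1-b$ are $\tfrac12$-axes, and for all $u\in\{a,\mathbf 1-a\}$, $v\in\{b,\mathbf 1-b\}$ one has $uv=-\tfrac14\mathbf 1+\tfrac12u+\tfrac12v$ and $N_{u,v}=N$.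
   Context: $\mathbb F$ is a field of characteristic $\neq 2$. For a commutative $\mathbb F$-algebra $A$, a subalgebra $N$, $x\in N$ and $\lambda\in\mathbb F$, put $N_\lambda(x)=\{y\in N: yx=\lambda y\}$ (and $A_\lambda(x)$ similarly). A $\tfrac12$-axis is an idempotent $a$ with $A=A_1(a)\oplus A_0(a)\oplus A_{1/2}(a)$, $A_1(a)=\mathbb F a$, and with $A_+(a)=A_1(a)\oplus A_0(a)$, $A_-(a)=A_{1/2}(a)$ satisfying $A_+A_+\subseteq A_+$, $A_+A_-\subseteq A_-$, $A_-A_-\subseteq A_+$, $A_0(a)A_0(a)\subseteq A_0(a)$. A primitive axial algebra of Jordan type $\tfrac12$ is a commutative algebra generated by $\tfrac12$-axes. The Miyamoto involution $\tau(a)$ is the automorphism acting as $1$ on $A_+(a)$ and $-1$ on $A_-(a)$. $N_{a,b}$ is the subalgebra generated by $a,b$; an identity element of $N$ is $\mathbf 1\in N$ with $\mathbf 1n=n$ for all $n\in N$. *)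

From HB Require Import structures.
From mathcomp Require Import all_boot all_order all_algebra.
From Stdlib Require Import ClassicalEpsilon.
Set Implicit Arguments. Unset Strict Implicit. Unset Printing Implicit Defensive.
Import Order.TTheory GRing.Theory Num.Theory.
Local Open Scope ring_scope.

Definition comm_alg (F : fieldType) (A : lmodType F) (mul : A -> A -> A) :=
  (forall x y, mul x y = mul y x) /\
  (forall (c : F) x y z, mul (c *: x + y) z = c *: mul x z + mul y z).

Definition eigsp (F : fieldType) (A : lmodType F) (mul : A -> A -> A)
  (x : A) (lam : F) (y : A) : Prop := mul y x = lam *: y.

Definition sub_eigsp (F : fieldType) (A : lmodType F) (mul : A -> A -> A)
  (N : A -> Prop) (x : A) (lam : F) (y : A) : Prop := N y /\ mul y x = lam *: y.

Definition halfF (F : fieldType) : F := (2%:R)^-1.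

Definition plus_part (F : fieldType) (A : lmodType F) (mul : A -> A -> A)
  (a y : A) : Prop :=
  exists y1 y0, y = y1 + y0 /\ eigsp mul a 1 y1 /\ eigsp mul a 0 y0.

Definition minus_part (F : fieldType) (A : lmodType F) (mul : A -> A -> A)
  (a y : A) : Prop := eigsp mul a (@halfF F) y.

Definition half_axis (F : fieldType) (A : lmodType F) (mul : A -> A -> A)
  (a : A) : Prop :=
  mul a a = a /\
      (forall x, exists x1 x0 xh, x = x1 + x0 + xh /\ eigsp mul a 1 x1 /\
                 eigsp mul a 0 x0 /\ eigsp mul a (@halfF F) xh) /\
      (forall y, eigsp mul a 1 y <-> exists c : F, y = c *: a) /\
      (forall y z, plus_part mul a y -> plus_part mul a z -> plus_part mul a (mul y z)) /\
      (forall y z, plus_part mul a y -> minus_part mul a z -> minus_part mul a (mul y z)) /\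
      (forall y z, minus_part mul a y -> minus_part mul a z -> plus_part mul a (mul y z)) /\
      (forall y z, eigsp mul a 0 y -> eigsp mul a 0 z -> eigsp mul a 0 (mul y z)).

Definition subalgebra (F : fieldType) (A : lmodType F) (mul : A -> A -> A)
  (S : A -> Prop) : Prop :=
  [/\ S 0, (forall (c : F) x y, S x -> S y -> S (c *: x + y))
    & (forall x y, S x -> S y -> S (mul x y))].

Definition gen_sub (F : fieldType) (A : lmodType F) (mul : A -> A -> A)
  (X : A -> Prop) (y : A) : Prop :=
  forall S, subalgebra mul S -> (forall x, X x -> S x) -> S y.

Definition N2 (F : fieldType) (A : lmodType F) (mul : A -> A -> A) (a b : A) :=
  gen_sub mul (fun x => x = a \/ x = b).

Definition axial_half (F : fieldType) (A : lmodType F) (mul : A -> A -> A) :=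
  comm_alg mul /\
  exists X : A -> Prop, (forall x, X x -> half_axis mul x) /\
                        (forall y, gen_sub mul X y).

Definition is_identity (F : fieldType) (A : lmodType F) (mul : A -> A -> A)
  (N : A -> Prop) (e : A) : Prop := N e /\ forall n, N n -> mul e n = n.

Definition has_dim (F : fieldType) (A : lmodType F) (S : A -> Prop) (n : nat) :=
  exists v : 'I_n -> A,
    [/\ forall i, S (v i),
        (forall c : 'I_n -> F, \sum_i c i *: v i = 0 -> forall i, c i = 0)
      & (forall y, S y -> exists c : 'I_n -> F, y = \sum_i c i *: v i)].

(* Miyamoto involution: x = x_+ + x_-  |->  x_+ - x_-  (x_+ in A_+(a),
   x_- in A_-(a)); the decomposition is chosen by Hilbert's epsilon, and is
   unique whenever a is a 1/2-axis. *)
Definition tau (F : fieldType) (A : lmodType F) (mul : A -> A -> A)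
  (a : A) (x : A) : A :=
  epsilon (inhabits (0 : A)) (fun y => exists p m, x = p + m /\
     plus_part mul a p /\ minus_part mul a m /\ y = p - m).

Definition fun_order (A : Type) (g : A -> A) (n : nat) : Prop :=
  [/\ (0 < n)%N, (forall x, iter n g x = x)
    & (forall m, (0 < m < n)%N -> exists x, iter m g x <> x)].

Definition gen_group (A : Type) (X : (A -> A) -> Prop) (h : A -> A) : Prop :=
  forall H : (A -> A) -> Prop,
    (forall g, X g -> H g) -> H id ->
    (forall u v, H u -> H v -> H (u \o v)) ->
    (forall u v, H u -> cancel u v -> cancel v u -> H v) -> H h.

(* group product in right-action convention: (g h) = apply g first, then h *)
Definition gprod (A : Type) (g h : A -> A) : A -> A := h \o g.

From Pilot Require Import Defs.
From HB Require Import structures.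
From mathcomp Require Import all_boot all_order all_algebra.
From mathcomp Require Import ring zify.
From Stdlib Require Import ClassicalEpsilon Classical FunctionalExtensionality.
Import GRing.Theory.
Set Implicit Arguments. Unset Strict Implicit. Unset Printing Implicit Defensive.

(* The product rule for ab makes N = N_{a,b} the span of a, 1 - a and 1 - 2b, which lie in
   the 1-, 0- and 1/2-eigenspaces of a.  This gives dim N = 3 and N_{1/2}(a), and shows
   a^{tau(b)} = 1 - a; hence 1 - a is a 1/2-axis with tau(1 - a) = tau(b) tau(a) tau(b).
   As b lies in the 0-eigenspace of 1 - b, the involution tau(1 - b) = tau(a) tau(b) tau(a)
   fixes b and so commutes with tau(b), i.e. (tau(a) tau(b))^4 = 1.  Thus tau(a), tau(b)
   generate a dihedral group of order 4 or 8, whose center in the second case is generated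
   by the square tau(a) tau(1 - a) of the rotation tau(a) tau(b). *)

Lemma gen_group_gen (T : Type) (X : (T -> T) -> Prop) g : X g -> gen_group X g.
Proof. by move=> Xg H XH _ _ _; exact: XH. Qed.

Lemma gen_group_id (T : Type) (X : (T -> T) -> Prop) : gen_group X id.
Proof. by move=> H _ Hid. Qed.

Lemma gen_group_comp (T : Type) (X : (T -> T) -> Prop) u v :
  gen_group X u -> gen_group X v -> gen_group X (u \o v).
Proof.
move=> Xu Xv H XH Hid Hcomp Hinv.
by apply: (Hcomp); [apply: Xu | apply: Xv].
Qed.

Lemma gen_group_involution (T : Type) (t h : T -> T) : involutive t ->
  gen_group (fun g => g = t) h <-> h = id \/ h = t.
Proof.
move=> tK; split; last first.
  by case=> ->; [exact: gen_group_id | exact: gen_group_gen].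
move=> Hh; apply: (Hh (fun h => h = id \/ h = t)); [by move=> _ ->; right | by left | |].
- move=> u v [] -> [] ->; [left | right | right | left] => //.
  exact: functional_extensionality tK.
- move=> u v [] -> uv vu; [left | right]; apply: functional_extensionality => x; first exact: vu.
  by rewrite -[in RHS](vu x) tK.
Qed.

Section Dihedral.
Variables (T : Type) (f g : T -> T).
Hypotheses (fK : involutive f) (gK : involutive g).
Hypothesis braid : forall x, g (f (g (f x))) = f (g (f (g x))).

Local Notation r := (gprod f g).
(* [t] is [iter 2 r], written as [f] followed by its conjugate [g f g]. *)
Local Notation t := (gprod f (g \o f \o g)).
Local Notation D := (gen_group (fun h => h = f \/ h = g)).

Lemma iter_rot4 x : iter 4 r x = x.
Proof. by rewrite /= /gprod /= braid !(fK, gK). Qed.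

Lemma iter_rot_mod4 k x : iter k r x = iter (k %% 4) r x.
Proof.
rewrite {1}(divn_eq k 4) addnC iterD; congr iter.
by elim: (k %/ 4) => // q IHq; rewrite mulSn iterD IHq iter_rot4.
Qed.

Lemma fun_order_rot x0 : r x0 <> x0 -> fun_order r 2 \/ fun_order r 4.
Proof.
move=> rx0; have [r2 | r2] := classic (forall x, iter 2 r x = x).
  by left; split=> // -[|[|m]] //= _; exists x0.
right; split=> [//|| m /andP[m_gt0 m_lt4]]; first exact: iter_rot4.
apply: NNPP => /(not_ex_not_all _ _) rm; apply: r2 => x.
case: m m_gt0 m_lt4 rm => [|[|[|[|m]]]] // _ _ rm.
- by have r1 y : r y = y := rm y; rewrite /= !r1.
- have r1 y : r y = y by rewrite -{1}(rm y) -iterS iter_rot4.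
  by rewrite /= !r1.
Qed.

Lemma fun_order_rot2 x0 : r x0 <> x0 ->
  fun_order r 2 <-> f = g \o f \o g /\ g = f \o g \o f.
Proof.
move=> rx0; split.
  move=> [_ r2 _]; split; apply: functional_extensionality => x /=.
    by have := r2 (f x); rewrite /= /gprod /= fK => ->.
  by have := r2 (g x); rewrite /= /gprod /= braid gK => ->.
case=> fE _; have fgf x : f x = g (f (g x)) by rewrite {1}fE.
split=> // [x | [|[|m]] // _]; last by exists x0.
by rewrite /= /gprod /= -fgf fK.
Qed.

Lemma f_iter_rot k x : f (iter k r x) = iter (3 * k) r (f x).
Proof.
elim: k => // k IHk.
have f_rot y : f (r y) = iter 3 r (f y) by rewrite /= /gprod /= fK braid gK.
by rewrite iterS f_rot IHk mulnS iterD.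
Qed.

Lemma dihedral_eltE h : D h ->
  exists k (flip : bool), forall x, h x = iter k r (if flip then f x else x).
Proof.
move=> Dh; apply: (Dh (fun h => exists k (flip : bool),
  forall x, h x = iter k r (if flip then f x else x))).
- move=> _ [->|->]; first by exists 0, true.
  by exists 1, true => x /=; rewrite /gprod /= fK.
- by exists 0, false.
- move=> u v [k [[] uE]] [j [flip vE]].
    exists (k + 3 * j), (~~ flip) => x /=.
    by rewrite uE vE f_iter_rot iterD; case: flip {vE} => //=; rewrite fK.
  by exists (k + j), flip => x /=; rewrite uE vE iterD.
- move=> u v [k [flip uE]] uv vu.
  have iter_k4 y : iter (k + 3 * k) r y = y.
    by rewrite iter_rot_mod4 (_ : k + 3 * k = k * 4) ?modnMl //; lia.
  case: flip uE => uE.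
    have uu y : u (u y) = y by rewrite !uE f_iter_rot fK -iterD iter_k4.
    by exists k, true => x; rewrite -uE -[v x]uu vu.
  exists (3 * k), false => x.
  by rewrite -{1}[x](_ : u (iter (3 * k) r x) = x) ?uv // uE -iterD iter_k4.
Qed.

Lemma dihedral_central h : D h -> ~ (forall x, f (g x) = g (f x)) ->
  (forall x, h (f x) = f (h x)) -> (forall x, h (g x) = g (h x)) ->
  h = id \/ h = t.
Proof.
move=> /dihedral_eltE[k [flip hE]] nc hf hg.
have {hE} : forall x, h x = iter (k %% 4) r (if flip then f x else x).
  by move=> x; rewrite hE -iter_rot_mod4.
have : (k %% 4 < 4)%N by rewrite ltn_pmod.
case: (k %% 4) => [|[|[|[|//]]]] _; case: flip => hE;
  first [ by left; apply: functional_extensionality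
        | by right; apply: functional_extensionality
        | exfalso; apply: nc => x ].
- by have := hg x; rewrite !hE.
- by have := hf x; rewrite !hE /= /gprod /= !fK => ->.
- by have := congr1 g (hg x); rewrite !hE /= /gprod /= !gK => ->.
- by have := hg x; rewrite !hE /= /gprod /= !fK !gK => ->.
- have {}hE y : h y = f (g (f y)) by rewrite hE /= /gprod /= fK braid gK.
  by have := hf x; rewrite !hE !fK => ->.
- have {}hE y : h y = f (g y) by rewrite hE /= /gprod /= braid gK fK.
  by have := congr1 f (hf x); rewrite !hE !fK => ->.
Qed.

Lemma rot2_central k : D k -> forall x, t (k x) = k (t x).
Proof.
move=> Dk; apply: (Dk (fun k => forall x, t (k x) = k (t x))) => //.
- by move=> _ [->|->] x; rewrite /gprod /= braid ?gK.
- by move=> u v ut vt x /=; rewrite ut vt.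
- by move=> u v ut uv vu x; rewrite -{2}(vu x) ut uv.
Qed.

Lemma dihedral_center : fun_order r 4 -> forall h,
  (D h /\ forall k, D k -> h \o k = k \o h) <-> gen_group (fun k => k = t) h.
Proof.
move=> [_ _ r4] h; have [x0 rx0] := r4 2 isT.
have tK : involutive t by exact: iter_rot4.
have Df : D f by apply: gen_group_gen; left.
have Dg : D g by apply: gen_group_gen; right.
rewrite gen_group_involution //; split.
  move=> [Dh hC]; apply: dihedral_central => // [fg|x|x].
  - by apply: rx0; rewrite /= /gprod /= -fg gK fK.
  - exact: (congr1 (fun u => u x) (hC f Df)).
  - exact: (congr1 (fun u => u x) (hC g Dg)).
case=> ->; first by split=> [|k _]; [exact: gen_group_id |].
split=> [|k Dk]; first exact: gen_group_comp (gen_group_comp (gen_group_comp Dg Df) Dg) Df.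
by apply: functional_extensionality => x /=; rewrite rot2_central.
Qed.

End Dihedral.

Local Open Scope ring_scope.

Section LinClosed.
Variables (F : fieldType) (A : lmodType F).

Definition lin_closed (S : A -> Prop) :=
  S 0 /\ forall (c : F) x y, S x -> S y -> S (c *: x + y).

Variables (S : A -> Prop) (S_lin : lin_closed S).

Lemma lin_closedD x y : S x -> S y -> S (x + y).
Proof. by move=> Sx Sy; rewrite -[x]scale1r; apply: S_lin.2. Qed.

Lemma lin_closedZ c x : S x -> S (c *: x).
Proof. by move=> Sx; rewrite -[_ *: _]addr0; apply: S_lin.2 => //; exact: S_lin.1. Qed.

Lemma lin_closedN x : S x -> S (- x).
Proof. by rewrite -scaleN1r; apply: lin_closedZ. Qed.

Lemma lin_closedB x y : S x -> S y -> S (x - y).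
Proof. by move=> Sx Sy; apply: lin_closedD => //; apply: lin_closedN. Qed.

End LinClosed.

Section GeneratedSubalgebra.
Variables (F : fieldType) (A : lmodType F) (mul : A -> A -> A).

Lemma gen_sub_subalgebra X : subalgebra mul (gen_sub mul X).
Proof.
split=> [S [] // | c x y xX yX S SS XS | x y xX yX S SS XS]; have [_ Slin Smul] := SS.
  by apply: Slin; [apply: xX | apply: yX].
by apply: Smul; [apply: xX | apply: yX].
Qed.

Lemma gen_sub_lin_closed X : lin_closed (gen_sub mul X).
Proof. by have [? ? _] := gen_sub_subalgebra X. Qed.

Lemma gen_sub_mul X x y : gen_sub mul X x -> gen_sub mul X y -> gen_sub mul X (mul x y).
Proof. by have [_ _] := gen_sub_subalgebra X; apply. Qed.

Lemma gen_sub_gen X x : X x -> gen_sub mul X x.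
Proof. by move=> Xx S _; apply. Qed.

Lemma N2C a b z : N2 mul a b z <-> N2 mul b a z.
Proof.
by split=> abz S SS XS; apply: abz => // x [] ->; apply: XS; [right | left | right | left].
Qed.

Lemma is_identity_N2 a b e : is_identity mul (N2 mul a b) e ->
  [/\ mul e a = a, mul e b = b & mul e e = e].
Proof. by case=> Ne eN; split; apply: eN => //; apply: gen_sub_gen; [left | right]. Qed.

End GeneratedSubalgebra.

Section CommAlgebra.
Variables (F : fieldType) (A : lmodType F) (mul : A -> A -> A).
Hypothesis alg : Defs.comm_alg mul.
Local Notation hf := (@halfF F).

Lemma mulC x y : mul x y = mul y x. Proof. by case: alg. Qed.

Lemma mul_linl c x y z : mul (c *: x + y) z = c *: mul x z + mul y z.
Proof. by case: alg. Qed.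

Lemma mul0l z : mul 0 z = 0.
Proof.
have := mul_linl 1 0 0 z; rewrite !scale1r addr0.
by move/(congr1 (fun w => w - mul 0 z)); rewrite subrr addrK.
Qed.

Lemma mulDl x y z : mul (x + y) z = mul x z + mul y z.
Proof. by have := mul_linl 1 x y z; rewrite !scale1r. Qed.

Lemma mulZl c x z : mul (c *: x) z = c *: mul x z.
Proof. by have := mul_linl c x 0 z; rewrite !addr0 mul0l addr0. Qed.

Lemma mulNl x z : mul (- x) z = - mul x z.
Proof. by rewrite -scaleN1r mulZl scaleN1r. Qed.

Lemma mulBl x y z : mul (x - y) z = mul x z - mul y z.
Proof. by rewrite mulDl mulNl. Qed.

Lemma mulDr x y z : mul z (x + y) = mul z x + mul z y.
Proof. by rewrite !(mulC z) mulDl. Qed.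

Lemma mulZr c x z : mul z (c *: x) = c *: mul z x.
Proof. by rewrite !(mulC z) mulZl. Qed.

Lemma mulBr x y z : mul z (x - y) = mul z x - mul z y.
Proof. by rewrite !(mulC z) mulBl. Qed.

Lemma eigsp_lin_closed a l : lin_closed (eigsp mul a l).
Proof.
split=> [|c x y]; first by rewrite /eigsp mul0l scaler0.
by rewrite /eigsp mul_linl => -> ->; rewrite scalerDr !scalerA mulrC.
Qed.

Lemma minus_part_lin_closed a : lin_closed (minus_part mul a).
Proof. exact: eigsp_lin_closed. Qed.

Lemma plus_part_lin_closed a : lin_closed (plus_part mul a).
Proof.
have [eig0_0 eig0_lin] := eigsp_lin_closed a 0.
have [eig1_0 eig1_lin] := eigsp_lin_closed a 1.
split=> [|c _ _ [x1 [x0 [-> [x1a x0a]]]] [y1 [y0 [-> [y1a y0a]]]]].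
  by exists 0, 0; rewrite addr0.
exists (c *: x1 + y1), (c *: x0 + y0).
by split; [rewrite scalerDr addrACA | split; [apply: eig1_lin | apply: eig0_lin]].
Qed.

Hypothesis two_neq0 : (2%:R : F) != 0.

Lemma halfF_neq0 : hf != 0.
Proof. by rewrite invr_eq0. Qed.

Lemma scale_halfF_eq0 (x : A) : hf *: x = 0 -> x = 0.
Proof. by move/eqP; rewrite scaler_eq0 (negbTE halfF_neq0) => /eqP. Qed.

Lemma subr_halfF : 1 - hf = hf.
Proof. by rewrite /halfF; field. Qed.

Lemma plus_minus_part_eq0 a y : plus_part mul a y -> minus_part mul a y -> y = 0.
Proof.
move=> [y1 [y0 [-> [y1a y0a]]]]; rewrite /minus_part /eigsp mulDl y1a y0a.
rewrite scale1r scale0r addr0 => y1E.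
have : (1 - hf) *: y1 = hf *: y0.
  by rewrite scalerBl scale1r {1}y1E scalerDr addrAC subrr add0r.
rewrite subr_halfF => /(scalerI halfF_neq0) y10.
move: y0a; rewrite /eigsp -y10 y1a scale1r scale0r => ->.
by rewrite addr0.
Qed.

Section MiyamotoInvolution.
Variables (a : A) (axis_a : half_axis mul a).
Local Notation ta := (tau mul a).

Lemma half_axis_decomp x :
  exists p m, [/\ x = p + m, plus_part mul a p & minus_part mul a m].
Proof.
have [_ [decomp _]] := axis_a; have [x1 [x0 [xh [-> [x1a [x0a xha]]]]]] := decomp x.
by exists (x1 + x0), xh; split=> //; exists x1, x0.
Qed.

(* The decomposition A = A_+(a) + A_-(a) is direct, so the choice made by [epsilon] is forced. *)
Lemma tauE p m : plus_part mul a p -> minus_part mul a m -> ta (p + m) = p - m.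
Proof.
move=> pa ma; rewrite /tau.
have [p' [m' [pmE p'a m'a]]] := half_axis_decomp (p + m).
case: (epsilon_spec (inhabits (0 : A)) (fun y => exists p1 m1, p + m = p1 + m1 /\
    plus_part mul a p1 /\ minus_part mul a m1 /\ y = p1 - m1)).
  by exists (p' - m'), p', m'.
move=> p1 [m1 [pm1E [p1a [m1a ->]]]].
have pp1 : p - p1 = m1 - m.
  by rewrite -[p](addrK m) pm1E -[p1 + m1 - m]addrA addrC addrK.
have {}pp1 : p - p1 = 0.
  apply: (@plus_minus_part_eq0 a); first exact: (lin_closedB (plus_part_lin_closed a) pa p1a).
  by rewrite pp1; exact: (lin_closedB (minus_part_lin_closed a) m1a ma).
have p1E : p1 = p by apply/eqP; rewrite eq_sym -subr_eq0 pp1.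
by move: pm1E; rewrite p1E => /addrI ->.
Qed.

Lemma tau_lin c x y : ta (c *: x + y) = c *: ta x + ta y.
Proof.
have [px [mx [-> pxa mxa]]] := half_axis_decomp x.
have [py [my [-> pya mya]]] := half_axis_decomp y.
have pa := (plus_part_lin_closed a).2 c _ _ pxa pya.
have ma := (minus_part_lin_closed a).2 c _ _ mxa mya.
rewrite scalerDr addrACA !tauE //.
by rewrite scalerBr opprD addrACA.
Qed.

Lemma tauD x y : ta (x + y) = ta x + ta y.
Proof. by have := tau_lin 1 x y; rewrite !scale1r. Qed.

Lemma tau0 : ta 0 = 0.
Proof. by apply: (@addrI _ (ta 0)); rewrite -tauD !addr0. Qed.

Lemma tauZ c x : ta (c *: x) = c *: ta x.
Proof. by have := tau_lin c x 0; rewrite !addr0 tau0 addr0. Qed.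

Lemma tauB x y : ta (x - y) = ta x - ta y.
Proof. by rewrite -scaleN1r tauD tauZ scaleN1r. Qed.

Lemma tau_mul x y : ta (mul x y) = mul (ta x) (ta y).
Proof.
have [_ [_ [_ [pp [pm [mm _]]]]]] := axis_a.
have [px [mx [-> pxa mxa]]] := half_axis_decomp x.
have [py [my [-> pya mya]]] := half_axis_decomp y.
have pa := lin_closedD (plus_part_lin_closed a) (pp _ _ pxa pya) (mm _ _ mxa mya).
have ma := lin_closedD (minus_part_lin_closed a) (pm _ _ pxa mya)
  (eq_ind _ (minus_part mul a) (pm _ _ pya mxa) _ (mulC _ _)).
rewrite mulDl !mulDr [mul mx py + _]addrC addrACA !tauE //.
by rewrite mulBl !mulBr opprD opprB addrACA.
Qed.

Lemma tauK : involutive ta.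
Proof.
move=> x; have [p [m [-> pa ma]]] := half_axis_decomp x.
have ma' := lin_closedN (minus_part_lin_closed a) ma.
by rewrite tauE // tauE ?opprK.
Qed.

Lemma tau_axis : ta a = a.
Proof.
have [aa _] := axis_a; have pa : plus_part mul a a.
  by exists a, 0; rewrite addr0 /eigsp scale1r scale0r mul0l.
by have := tauE pa (minus_part_lin_closed a).1; rewrite addr0 subr0.
Qed.

Lemma plus_part_unit e : mul e a = a -> plus_part mul a e.
Proof.
move=> ea; have [aa _] := axis_a; exists a, (e - a); rewrite addrC subrK.
by rewrite /eigsp scale1r scale0r mulBl ea aa subrr.
Qed.

Lemma tau_unit e : mul e a = a -> ta e = e.
Proof.
move=> /plus_part_unit pe.
by have := tauE pe (minus_part_lin_closed a).1; rewrite addr0 subr0.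
Qed.

End MiyamotoInvolution.

Lemma eigsp_free a u v w c0 c1 c2 :
  eigsp mul a 1 u -> eigsp mul a 0 v -> minus_part mul a w ->
  u != 0 -> v != 0 -> w != 0 -> c0 *: u + c1 *: v + c2 *: w = 0 ->
  [/\ c0 = 0, c1 = 0 & c2 = 0].
Proof.
move=> ua va wa u0 v0 w0 sum0.
have scale_eq0 (k : F) (x : A) : x != 0 -> k *: x = 0 -> k = 0.
  by move=> x0 /eqP; rewrite scaler_eq0 (negbTE x0) orbF => /eqP.
have pa : plus_part mul a (c0 *: u + c1 *: v).
  exists (c0 *: u), (c1 *: v); split=> //; split.
    exact: (lin_closedZ (eigsp_lin_closed a 1) _ ua).
  exact: (lin_closedZ (eigsp_lin_closed a 0) _ va).
have ma : minus_part mul a (c0 *: u + c1 *: v).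
  rewrite -[_ + _]opprK (addr0_eq sum0).
  exact: (lin_closedN (minus_part_lin_closed a) (lin_closedZ (minus_part_lin_closed a) _ wa)).
have {pa ma} uv0 := plus_minus_part_eq0 pa ma.
have c00 : c0 = 0.
  apply: (scale_eq0 _ _ u0); move: (congr1 (mul^~ a) uv0).
  by rewrite mul0l mulDl !mulZl ua va scale1r scale0r scaler0 addr0.
have c10 : c1 = 0 by apply: (scale_eq0 _ _ v0); rewrite -uv0 c00 scale0r add0r.
by split=> //; apply: (scale_eq0 _ _ w0); rewrite -sum0 uv0 add0r.
Qed.

Section Transport.
Variables (c : A) (axis_c : half_axis mul c).
Local Notation tc := (tau mul c).

Lemma eigsp_tau a l y : eigsp mul (tc a) l y <-> eigsp mul a l (tc y).
Proof.
rewrite /eigsp; split=> [ya | tya].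
  by rewrite -(tauK axis_c a) -tau_mul // ya tauZ.
by rewrite -(tauK axis_c (mul y _)) tau_mul // tauK // tya tauZ // tauK.
Qed.

Lemma plus_part_tau a y : plus_part mul (tc a) y <-> plus_part mul a (tc y).
Proof.
split=> [[y1 [y0 [-> [y1a y0a]]]] | [y1 [y0 [yE [y1a y0a]]]]].
  by exists (tc y1), (tc y0); rewrite tauD //; split=> //; split; apply/eigsp_tau.
exists (tc y1), (tc y0); rewrite -tauD // -yE tauK //.
by split=> //; split; apply/eigsp_tau; rewrite tauK.
Qed.

Lemma half_axis_tau a : half_axis mul a -> half_axis mul (tc a).
Proof.
move=> [aa [decomp [eig1 [pp [pm [mm zz]]]]]].
split; first by rewrite -tau_mul // aa.
split.
  move=> x; have [x1 [x0 [xh [xE [x1a [x0a xha]]]]]] := decomp (tc x).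
  exists (tc x1), (tc x0), (tc xh).
  split; first by rewrite -!tauD // -xE tauK.
  by split; [|split]; apply/eigsp_tau; rewrite tauK.
split.
  move=> y; rewrite eigsp_tau eig1; split=> -[k yE]; exists k.
    by rewrite -(tauK axis_c y) yE tauZ.
  by rewrite yE tauZ // tauK.
split.
  move=> y z /plus_part_tau ya /plus_part_tau za.
  by apply/plus_part_tau; rewrite tau_mul //; apply: pp.
split.
  move=> y z /plus_part_tau ya; rewrite /minus_part => /eigsp_tau za.
  by apply/eigsp_tau; rewrite tau_mul //; apply: pm.
split.
  rewrite /minus_part => y z /eigsp_tau ya /eigsp_tau za.
  by apply/plus_part_tau; rewrite tau_mul //; apply: mm.
by move=> y z /eigsp_tau ya /eigsp_tau za; apply/eigsp_tau; rewrite tau_mul //; apply: zz.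
Qed.

Lemma tau_tau a x : half_axis mul a -> tau mul (tc a) x = tc (tau mul a (tc x)).
Proof.
move=> axis_a; have [p [m [xE pa ma]]] := half_axis_decomp axis_a (tc x).
have pa' : plus_part mul (tc a) (tc p) by apply/plus_part_tau; rewrite tauK.
have ma' : minus_part mul (tc a) (tc m) by apply/eigsp_tau; rewrite tauK.
rewrite {1}(_ : x = tc p + tc m); last by rewrite -tauD // -xE tauK.
by rewrite (tauE (half_axis_tau axis_a)) // xE (tauE axis_a) // tauB.
Qed.

End Transport.

Section RankThree.
Variables (e a b : A).
Hypotheses (axis_a : half_axis mul a) (axis_b : half_axis mul b) (a_neq_b : a != b).
Hypotheses (ea : mul e a = a) (eb : mul e b = b) (ee : mul e e = e).
Hypothesis mul_ab : mul a b = - ((4%:R : F)^-1 *: e) + hf *: a + hf *: b.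

Definition comb (x y z : F) := x *: e + y *: a + z *: b.

Lemma comb_e : e = comb 1 0 0. Proof. by rewrite /comb !scale1r !scale0r !addr0. Qed.
Lemma comb_a : a = comb 0 1 0. Proof. by rewrite /comb !scale1r !scale0r addr0 add0r. Qed.
Lemma comb_b : b = comb 0 0 1. Proof. by rewrite /comb !scale1r !scale0r !add0r. Qed.
Lemma comb0 : 0 = comb 0 0 0. Proof. by rewrite /comb !scale0r !addr0. Qed.

Lemma combD x y z x' y' z' : comb x y z + comb x' y' z' = comb (x + x') (y + y') (z + z').
Proof. by rewrite /comb !scalerDl addrACA (addrACA (x *: e)). Qed.

Lemma combZ k x y z : k *: comb x y z = comb (k * x) (k * y) (k * z).
Proof. by rewrite /comb !scalerDr !scalerA. Qed.

Lemma combN x y z : - comb x y z = comb (- x) (- y) (- z).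
Proof. by rewrite -scaleN1r combZ !mulN1r. Qed.

Lemma mul_comb x y z x' y' z' : mul (comb x y z) (comb x' y' z') =
  comb (x * x' - (4%:R)^-1 * (y * z' + z * y'))
       (x * y' + y * x' + y * y' + hf * (y * z' + z * y'))
       (x * z' + z * x' + z * z' + hf * (y * z' + z * y')).
Proof.
have [aa _] := axis_a; have [bb _] := axis_b.
rewrite {1}/comb !mulDl !mulZl /comb !mulDr !mulZr (mulC b a) (mulC a e) (mulC b e).
rewrite ee ea eb aa bb mul_ab [e]comb_e [a]comb_a [b]comb_b !(combD, combN, combZ).
by congr comb; ring.
Qed.

Lemma four_neq0 : (4%:R : F) != 0.
Proof. by rewrite (_ : 4%:R = 2%:R * 2%:R) ?mulf_neq0 // -natrM. Qed.

Ltac comb_field := rewrite ?comb_e ?comb_a ?comb_b ?comb0;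
  rewrite ?(combD, combN, combZ, mul_comb); congr comb;
  rewrite /halfF; field; rewrite ?two_neq0 ?four_neq0 //.

Lemma minus_part_e_sub2b : minus_part mul a (e - 2%:R *: b).
Proof. rewrite /minus_part /eigsp; comb_field. Qed.

Lemma e_sub2b_neq0 : e - 2%:R *: b != 0.
Proof.
rewrite subr_eq0; apply/eqP => e2b; have [bb _] := axis_b.
have b0 : b = 0.
  by apply: (@addrI _ b); rewrite addr0 -[in RHS]eb e2b mulZl bb scaler_nat mulr2n.
by move: a_neq_b; rewrite b0 -ea e2b b0 scaler0 mul0l eqxx.
Qed.

Lemma a_neq0 : a != 0.
Proof.
apply/eqP => a0; have := minus_part_e_sub2b; rewrite /minus_part /eigsp a0 mulC mul0l.
by move/esym/scale_halfF_eq0/eqP; rewrite (negbTE e_sub2b_neq0).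
Qed.

Lemma e_sub_a_neq0 : e - a != 0.
Proof.
rewrite subr_eq0; apply/eqP => ae; have := minus_part_e_sub2b; rewrite /minus_part /eigsp -ae.
have -> : mul (e - 2%:R *: b) e = e - 2%:R *: b by comb_field.
move/(congr1 (fun v => v - hf *: (e - 2%:R *: b))); rewrite subrr.
rewrite -{1}[e - _]scale1r -scalerBl subr_halfF => /scale_halfF_eq0/eqP.
by rewrite (negbTE e_sub2b_neq0).
Qed.

Lemma comb_free c0 c1 c2 :
  c0 *: a + c1 *: (e - a) + c2 *: (e - 2%:R *: b) = 0 -> [/\ c0 = 0, c1 = 0 & c2 = 0].
Proof.
apply: eigsp_free minus_part_e_sub2b a_neq0 e_sub_a_neq0 e_sub2b_neq0.
  by have [aa _] := axis_a; rewrite /eigsp scale1r.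
rewrite /eigsp; comb_field.
Qed.

Lemma tau_a_b : tau mul a b = e - b.
Proof.
have pe : plus_part mul a (hf *: e).
  exact: (lin_closedZ (plus_part_lin_closed a) _ (plus_part_unit axis_a ea)).
have me : minus_part mul a (- (hf *: (e - 2%:R *: b))).
  exact: (lin_closedN (minus_part_lin_closed a)
    (lin_closedZ (minus_part_lin_closed a) _ minus_part_e_sub2b)).
rewrite {1}(_ : b = hf *: e + - (hf *: (e - 2%:R *: b))) ?tauE //; comb_field.
Qed.

Lemma half_axis_e_sub_b : half_axis mul (e - b).
Proof. by rewrite -tau_a_b; exact: half_axis_tau. Qed.

Lemma tau_e_sub_b : tau mul (e - b) = tau mul a \o tau mul b \o tau mul a.
Proof. by apply: functional_extensionality => x; rewrite -tau_a_b tau_tau. Qed.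

Lemma tau_braid x : tau mul b (tau mul a (tau mul b (tau mul a x))) =
  tau mul a (tau mul b (tau mul a (tau mul b x))).
Proof.
(* tau(e - b) fixes b, hence commutes with tau (tau (e - b) b) = tau b. *)
have fix_b : tau mul (e - b) b = b.
  have pb : plus_part mul (e - b) b.
    exists 0, b; rewrite add0r; split=> //; split; first exact: (eigsp_lin_closed _ _).1.
    rewrite /eigsp scale0r; comb_field.
  by have := tauE half_axis_e_sub_b pb (eigsp_lin_closed _ _).1; rewrite addr0 subr0.
have := tau_tau half_axis_e_sub_b (tau mul (e - b) x) axis_b.
by rewrite fix_b tauK ?tau_e_sub_b //; exact: half_axis_e_sub_b.
Qed.

Lemma tau_b_a_b : tau mul b (tau mul a b) <> b.
Proof.
rewrite tau_a_b tauB // tau_unit // tau_axis // => ebb.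
by move: e_sub2b_neq0; rewrite scaler_nat mulr2n opprD addrA ebb subrr eqxx.
Qed.

Lemma mul_axis_pair u v : u = a \/ u = e - a -> v = b \/ v = e - b ->
  mul u v = - ((4%:R : F)^-1 *: e) + hf *: u + hf *: v.
Proof. by move=> [->|->] [->|->]; comb_field. Qed.

Hypothesis N2e : N2 mul a b e.

Lemma N2_comb z : N2 mul a b z <-> exists x y w, z = comb x y w.
Proof.
split=> [abz | [x [y [w ->]]]].
  apply: (abz (fun z => exists x y w, z = comb x y w)); last first.
    by move=> _ [->|->]; [exists 0, 1, 0; exact: comb_a | exists 0, 0, 1; exact: comb_b].
  split; first by exists 0, 0, 0; exact: comb0.
    by move=> c _ _ [x [y [w ->]]] [x' [y' [w' ->]]]; do 3!eexists; rewrite combZ combD.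
  by move=> _ _ [x [y [w ->]]] [x' [y' [w' ->]]]; do 3!eexists; rewrite mul_comb.
have NL := gen_sub_lin_closed mul (fun x => x = a \/ x = b).
apply: (lin_closedD NL); [apply: (lin_closedD NL)|]; apply: (lin_closedZ NL) => //.
  by apply: gen_sub_gen; left.
by apply: gen_sub_gen; right.
Qed.

Lemma N2_dim3 : has_dim (N2 mul a b) 3.
Proof.
exists (fun i : 'I_3 => [:: a; e - a; e - 2%:R *: b]`_i); split.
- case=> [[|[|[|//]]] ?] /=; apply/N2_comb;
    [exists 0, 1, 0 | exists 1, (-1), 0 | exists 1, 0, (- 2%:R)]; comb_field.
- move=> c; rewrite !big_ord_recl big_ord0 addr0 /= addrA => /comb_free[c0 c1 c2].
  by case=> [[|[|[|//]]] ?]; [rewrite -c0 | rewrite -c1 | rewrite -c2]; congr c; apply: val_inj.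
- move=> _ /N2_comb[x [y [w ->]]].
  exists (fun i : 'I_3 => [:: x + y + hf * w; x + hf * w; - (hf * w)]`_i).
  rewrite !big_ord_recl big_ord0 /=; comb_field.
Qed.

Lemma N2_eigsp_half z :
  sub_eigsp mul (N2 mul a b) a hf z <-> exists c, z = c *: (e - 2%:R *: b).
Proof.
split=> [[/N2_comb[x [y [w zE]]] za] | [c ->]]; last first.
  split; last exact: (lin_closedZ (minus_part_lin_closed a) _ minus_part_e_sub2b).
  by apply/N2_comb; exists c, 0, (- (2%:R * c)); comb_field.
have pz : plus_part mul a (z + hf * w *: (e - 2%:R *: b)).
  exists ((x + y + hf * w) *: a), ((x + hf * w) *: (e - a)).
  by rewrite /eigsp zE; split; [|split]; comb_field.
have mz : minus_part mul a (z + hf * w *: (e - 2%:R *: b)).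
  exact: (lin_closedD (minus_part_lin_closed a) za
    (lin_closedZ (minus_part_lin_closed a) _ minus_part_e_sub2b)).
by exists (- (hf * w)); apply/eqP; rewrite scaleNr -addr_eq0 (plus_minus_part_eq0 pz mz).
Qed.

Lemma N2_axis_pair u v : u = a \/ u = e - a -> v = b \/ v = e - b ->
  forall z, N2 mul u v z <-> N2 mul a b z.
Proof.
move=> ua vb z; have NL := gen_sub_lin_closed mul (fun x => x = u \/ x = v).
have Nu : N2 mul u v u by apply: gen_sub_gen; left.
have Nv : N2 mul u v v by apply: gen_sub_gen; right.
have Ne : N2 mul u v e.
  rewrite (_ : e = 2%:R *: u + 2%:R *: v - 4%:R *: mul u v).
    exact: (lin_closedB NL (lin_closedD NL (lin_closedZ NL _ Nu) (lin_closedZ NL _ Nv))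
      (lin_closedZ NL _ (gen_sub_mul Nu Nv))).
  by case: ua => ->; case: vb => ->; comb_field.
have Na : N2 mul u v a.
  case: ua => [<- // | uE]; rewrite (_ : a = e - u); first exact: (lin_closedB NL).
  by rewrite uE opprB addrC subrK.
have Nb : N2 mul u v b.
  case: vb => [<- // | vE]; rewrite (_ : b = e - v); first exact: (lin_closedB NL).
  by rewrite vE opprB addrC subrK.
split=> [uvz | /N2_comb[x [y [w ->]]]].
  have Nuv x : x = u \/ x = v -> N2 mul a b x.
    by case=> ->; [case: ua | case: vb] => ->; apply/N2_comb;
      [exists 0, 1, 0 | exists 1, (-1), 0 | exists 0, 0, 1 | exists 1, 0, (-1)]; comb_field.
  exact: (uvz _ (gen_sub_subalgebra _ _) Nuv).
by apply: (lin_closedD NL); [apply: (lin_closedD NL)|]; apply: (lin_closedZ NL).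
Qed.

End RankThree.

End CommAlgebra.

Theorem lemma3p5 (F : fieldType) (A : lmodType F) (mul : A -> A -> A)
  (a b one : A) :
  (2%:R : F) != 0 ->
  axial_half mul ->
  half_axis mul a -> half_axis mul b -> a != b ->
  is_identity mul (N2 mul a b) one ->
  mul a b = - ((4%:R : F)^-1 *: one) + @halfF F *: a + @halfF F *: b ->
  let N := N2 mul a b in
  let ta := tau mul a in
  let tb := tau mul b in
  (* (1) and (2), for {x, y} = {a, b} *)
  (has_dim N 3 /\
   forall x y, (x = a /\ y = b) \/ (x = b /\ y = a) ->
     tau mul y x = one - x /\
     (forall z, sub_eigsp mul N x (@halfF F) z <->
                exists c : F, z = c *: (one - 2%:R *: y))) /\
  (* (3) *)
  (fun_order (gprod ta tb) 2 \/ fun_order (gprod ta tb) 4) /\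
  (* (4) *)
  (fun_order (gprod ta tb) 2 <->
     (forall z, z = a \/ z = b -> tau mul z = tau mul (one - z))) /\
  (* (5) *)
  (fun_order (gprod ta tb) 4 ->
     gprod ta (tau mul (one - a)) = gprod tb (tau mul (one - b)) /\
     forall h,
       (gen_group (fun g => g = ta \/ g = tb) h /\
        forall k, gen_group (fun g => g = ta \/ g = tb) k -> h \o k = k \o h)
       <-> gen_group (fun g => g = gprod ta (tau mul (one - a))) h) /\
  (* (6) *)
  (half_axis mul (one - a) /\ half_axis mul (one - b) /\
   forall u v, (u = a \/ u = one - a) -> (v = b \/ v = one - b) ->
     mul u v = - ((4%:R : F)^-1 *: one) + @halfF F *: u + @halfF F *: v /\
     (forall z, N2 mul u v z <-> N z)).
Proof.
move=> two_neq0 [alg _] axis_a axis_b a_neq_b one_id mul_ab N ta tb.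
have [ea eb ee] := is_identity_N2 one_id; have [N_one _] := one_id.
have N_one' : N2 mul b a one by apply/N2C.
have mul_ba : mul b a = - ((4%:R : F)^-1 *: one) + halfF F *: b + halfF F *: a.
  by rewrite mulC // mul_ab addrAC.
have tau_ba := tau_a_b alg two_neq0 axis_b axis_a eb ea ee mul_ba.
have tau_ab := tau_a_b alg two_neq0 axis_a axis_b ea eb ee mul_ab.
have tau_one_a := tau_e_sub_b alg two_neq0 axis_b axis_a eb ea ee mul_ba.
have tau_one_b := tau_e_sub_b alg two_neq0 axis_a axis_b ea eb ee mul_ab.
have braid := tau_braid alg two_neq0 axis_a axis_b ea eb ee mul_ab.
have rot_b := tau_b_a_b alg two_neq0 axis_a axis_b a_neq_b ea eb ee mul_ab.
have [taK tbK] := (tauK alg two_neq0 axis_a, tauK alg two_neq0 axis_b).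
split; [split | split; [|split; [|split]]].
- exact: (N2_dim3 alg two_neq0 axis_a axis_b a_neq_b ea eb ee mul_ab N_one).
- move=> x y [[-> ->] | [-> ->]]; split=> //.
    exact: (N2_eigsp_half alg two_neq0 axis_a axis_b ea eb ee mul_ab N_one).
  move=> z; rewrite -(N2_eigsp_half alg two_neq0 axis_b axis_a eb ea ee mul_ba N_one').
  by split=> -[Nz za]; split=> //; apply/N2C.
- exact: (fun_order_rot taK tbK braid rot_b).
- rewrite (fun_order_rot2 taK tbK braid rot_b); split=> [[ta_E tb_E] z [->|->] | zE].
  + by rewrite tau_one_a.
  + by rewrite tau_one_b.
  + by rewrite -tau_one_a -tau_one_b; split; apply: zE; [left | right].
- move=> r4; rewrite tau_one_a tau_one_b; split.
    by apply: functional_extensionality => x; exact: braid.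
  exact: dihedral_center.
- split; [rewrite -tau_ba | split; [rewrite -tau_ab |]]; try exact: half_axis_tau.
  move=> u v ua vb; split.
    exact: (mul_axis_pair alg two_neq0 axis_a axis_b ea eb ee mul_ab ua vb).
  exact: (N2_axis_pair alg two_neq0 axis_a axis_b ea eb ee mul_ab N_one ua vb).
Qed.
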